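(* Let $\varphi:\mathbb{R}^n\to[0,\infty]$ be a geometric convex function. Then for all $s,t>0$, \[ \left(\underline{K}_{1/s}(\varphi)\right)^{\circ}\subseteq\underline{K}_{s}(\varphi^{\circ})\subseteq(st+1)\left(\underline{K}_{t}(\varphi)\right)^{\circ}. \]
   Context: A geometric convex function is a lower semi-continuous convex function $\varphi:\mathbb{R}^n\to[0,\infty]$ with $\varphi(0)=0$. The polarity transform is $\varphi^{\circ}(x)=\sup_{y\in\mathbb{R}^n}\frac{\langle x,y\rangle-1}{\varphi(y)}$, with conventions $\frac{+}{0}=\infty$, $\frac{0}{0}=0$, $\frac{-}{0}=0$. For $t\ge0$, $\underline{K}_t(\varphi)=\{x\in\mathbb{R}^n:\varphi(x)\le t\}$. For a set $A\subseteq\mathbb{R}^n$, $A^{\circ}=\{x:\sup_{y\in A}\langle x,y\rangle\le1\}$. *)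

From mathcomp Require Import all_boot.
From Stdlib Require Import Reals ClassicalEpsilon.
Set Implicit Arguments.
Unset Strict Implicit.
Open Scope R_scope.

Definition vec (n : nat) := 'I_n -> R.

Definition vadd n (x y : vec n) : vec n := fun i => x i + y i.
Definition vscale n (c : R) (x : vec n) : vec n := fun i => c * x i.
Definition vzero n : vec n := fun _ => 0.
Definition inner n (x y : vec n) : R := \big[Rplus/0]_(i < n) (x i * y i).
Definition dist n (x y : vec n) : R :=
  sqrt (\big[Rplus/0]_(i < n) ((x i - y i) * (x i - y i))).

Inductive ereal := Fin (r : R) | PInf.

Definition ele (a b : ereal) : Prop :=
  match a, b with
  | _, PInf => True
  | PInf, Fin _ => False
  | Fin r, Fin s => r <= s
  end.
Definition elt (a b : ereal) : Prop := ele a b /\ a <> b.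

Definition nonneg_valued n (phi : vec n -> ereal) := forall x, ele (Fin 0) (phi x).
Definition convex_fun n (phi : vec n -> ereal) :=
  forall (x y : vec n) (a b l : R), phi x = Fin a -> phi y = Fin b -> 0 < l < 1 ->
    ele (phi (vadd (vscale (1 - l) x) (vscale l y))) (Fin ((1 - l) * a + l * b)).
Definition lsc n (phi : vec n -> ereal) :=
  forall (x : vec n) (c : R), elt (Fin c) (phi x) ->
    exists d, 0 < d /\ forall y, dist x y < d -> elt (Fin c) (phi y).
Definition geometric_convex n (phi : vec n -> ereal) :=
  nonneg_valued phi /\ lsc phi /\ convex_fun phi /\ phi (@vzero n) = Fin 0.

(* the quotient (a - 1)/phi(y) with the conventions +/0 = oo, 0/0 = 0, -/0 = 0,
   and (finite)/oo = 0 *)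
Definition equot (a : R) (b : ereal) : ereal :=
  match b with
  | PInf => Fin 0
  | Fin r => if Req_EM_T r 0 then (if Rlt_dec 0 a then PInf else Fin 0)
             else Fin (a / r)
  end.

Definition is_esup (E : ereal -> Prop) (m : ereal) :=
  (forall e, E e -> ele e m) /\ (forall u, (forall e, E e -> ele e u) -> ele m u).
Definition esup (E : ereal -> Prop) : ereal :=
  epsilon (inhabits PInf) (fun m => is_esup E m).

Definition polar n (phi : vec n -> ereal) : vec n -> ereal :=
  fun x => esup (fun e => exists y, e = equot (inner x y - 1) (phi y)).

Definition sublevel n (phi : vec n -> ereal) (t : R) : vec n -> Prop :=
  fun x => ele (phi x) (Fin t).
Definition polar_set n (A : vec n -> Prop) : vec n -> Prop :=
  fun x => forall y, A y -> inner x y <= 1.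
Definition dilate n (c : R) (A : vec n -> Prop) : vec n -> Prop :=
  fun x => exists z, A z /\ x = vscale c z.
Definition vsubset n (A B : vec n -> Prop) := forall x, A x -> B x.

From mathcomp Require Import all_boot.
From Stdlib Require Import Reals.
From Stdlib Require Import Lra Classical ClassicalEpsilon FunctionalExtensionality.
From HB Require Import structures.
Open Scope R_scope.

(* The whole argument rests on one description of the sublevel sets of the
   polar function: for s >= 0,
        phi°(x) <= s   <->   <x,y> <= 1 + s * phi(y)  for every y with phi(y) < oo
   (lemma [polar_sublevel]).  It follows from the existence of suprema in
   [0,oo] ([esup_spec]) and a case analysis of the quotient conventions
   ([equot_le]).
   - First inclusion: if <x,.> <= 1 on K_{1/s}(phi) and phi(y) = r > 1/s, then
     the point y/(sr) lies in K_{1/s}(phi) because phi is convex and vanishes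
     at 0 ([convex_origin]); hence <x,y> <= sr <= 1 + sr ([polar_sublevel_bound]).
   - Second inclusion: on K_t(phi) the bound gives <x,y> <= 1 + st, i.e. x lies
     in the (st+1)-dilate of the polar of K_t(phi) ([dilate_polar_set]). *)

(* Real addition is a commutative monoid, so the generic lemmas on
   \big[Rplus/0] (splitting off the last index) apply to [inner]. *)
Lemma Rplus_0_l_id : left_id 0 Rplus. Proof. move=> x; ring. Qed.
Lemma Rplus_assoc_law : associative Rplus. Proof. move=> x y z; ring. Qed.
Lemma Rplus_comm_law : commutative Rplus. Proof. move=> x y; ring. Qed.
HB.instance Definition _ :=
  Monoid.isComLaw.Build R 0 Rplus Rplus_assoc_law Rplus_comm_law Rplus_0_l_id.

Lemma big_Rmult_distr (n : nat) (c : R) (F : 'I_n -> R) :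
  \big[Rplus/0]_(i < n) (c * F i) = c * \big[Rplus/0]_(i < n) F i.
Proof.
elim: n F => [|n IH] F; first by rewrite !big_ord0; ring.
by rewrite !big_ord_recr /= IH Rmult_plus_distr_l.
Qed.

Lemma inner_scale_l n (x y : vec n) (c : R) : inner (vscale c x) y = c * inner x y.
Proof.
rewrite /inner -big_Rmult_distr; apply: eq_bigr => i _; rewrite /vscale; ring.
Qed.

Lemma inner_scale_r n (x y : vec n) (c : R) : inner x (vscale c y) = c * inner x y.
Proof.
rewrite /inner -big_Rmult_distr; apply: eq_bigr => i _; rewrite /vscale; ring.
Qed.

(* Every nonempty set of extended reals R ∪ {+oo} has a supremum; this is what
   makes [polar], defined through a chosen supremum, meaningful. *)
Lemma esup_spec (E : ereal -> Prop) : (exists e, E e) -> is_esup E (esup E).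
Proof.
move=> [e0 He0]; rewrite /esup; apply: epsilon_spec.
case: (classic (exists u : R, forall e, E e -> ele e (Fin u))) => [[u Hu]|Hunb].
- (* bounded: take the real supremum of the finite members *)
  pose S := fun r => E (Fin r).
  have S_bounded : bound S by exists u => r Hr; exact: (Hu _ Hr).
  have S_inhabited : exists r, S r.
  { case: e0 He0 => [r|] He0; first by exists r. by have := Hu _ He0. }
  have [l [l_ub l_least]] := completeness S S_bounded S_inhabited.
  exists (Fin l); split.
  + move=> [r|] Hr /=; [exact: l_ub | exact: (Hu _ Hr)].
  + move=> [v|] Hv //=; apply: l_least => r Hr; exact: (Hv _ Hr).
-
  exists PInf; split; first by move=> [r|].
  move=> [v|] Hv //=; apply: Hunb; by exists v.
Qed.

Lemma polar_le n (phi : vec n -> ereal) (x : vec n) (s : R) :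
  ele (polar phi x) (Fin s) <->
  forall y, ele (equot (inner x y - 1) (phi y)) (Fin s).
Proof.
set E := fun e => exists y, e = equot (inner x y - 1) (phi y).
have [sup_ub sup_least] : is_esup E (polar phi x).
{ apply: esup_spec; by exists (equot (inner x (@vzero n) - 1) (phi (@vzero n))), (@vzero n). }
split.
- move=> Hs y; move: Hs (sup_ub _ (ex_intro _ y erefl)).
  case: (polar phi x); case: (equot _ _) => //= *; lra.
- move=> Hy; apply: sup_least => e [y ->]; exact: Hy.
Qed.

Lemma equot_le (a s : R) (v : ereal) : 0 <= s -> ele (Fin 0) v ->
  ele (equot (a - 1) v) (Fin s) <-> forall r, v = Fin r -> a - 1 <= s * r.
Proof.
move=> s_ge0; case: v => [r|] /= r_ge0; last by split=> // _ r.
have iff_r : (a - 1 <= s * r) <-> forall r', Fin r = Fin r' -> a - 1 <= s * r'.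
{ by split=> [H r' [<-] | H]; last exact: H. }
rewrite -iff_r; destruct (Req_EM_T r 0) as [r0 | r_neq0].
- subst r; case: (Rlt_dec 0 (a - 1)) => /= Ha; split=> //; lra.
- have r_gt0 : 0 < r by lra.
  have div_mul : (a - 1) / r * r = a - 1 by field.
  by split=> /= H; nra.
Qed.

Lemma polar_sublevel n (phi : vec n -> ereal) (s : R) (x : vec n) :
  nonneg_valued phi -> 0 <= s ->
  sublevel (polar phi) s x <->
  forall y r, phi y = Fin r -> inner x y <= 1 + s * r.
Proof.
move=> phi_ge0 s_ge0; rewrite /sublevel polar_le.
have quot_le y := equot_le (inner x y) s (phi y) s_ge0 (phi_ge0 y).
split=> H y; [move=> r Hr | ].
- by have := (quot_le y).1 (H y) r Hr; lra.
- by apply/quot_le => r Hr; have := H y r Hr; lra.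
Qed.

Lemma convex_origin n (phi : vec n -> ereal) (y : vec n) (r l : R) :
  convex_fun phi -> phi (@vzero n) = Fin 0 -> phi y = Fin r -> 0 < l < 1 ->
  ele (phi (vscale l y)) (Fin (l * r)).
Proof.
move=> phi_cvx phi0 Hy Hl; have := phi_cvx _ _ _ _ _ phi0 Hy Hl.
have -> : vadd (vscale (1 - l) (@vzero n)) (vscale l y) = vscale l y.
{ apply: functional_extensionality => i; rewrite /vadd /vscale /vzero; ring. }
by have -> : (1 - l) * 0 + l * r = l * r by ring.
Qed.

Lemma dilate_polar_set n (A : vec n -> Prop) (x : vec n) (c : R) :
  0 < c -> (forall y, A y -> inner x y <= c) -> dilate c (polar_set A) x.
Proof.
move=> c_gt0 Hx; exists (vscale (/ c) x); split.
- move=> y Hy; rewrite inner_scale_l.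
  have := Rmult_le_compat_l (/ c) _ _ (Rlt_le _ _ (Rinv_0_lt_compat _ c_gt0)) (Hx y Hy).
  by rewrite Rinv_l //; lra.
- apply: functional_extensionality => i; rewrite /vscale; field; lra.
Qed.

(* Points y with
   phi(y) = r > 1/s are pulled back into K_{1/s}(phi) by the factor 1/(sr). *)
Lemma polar_sublevel_bound n (phi : vec n -> ereal) (s : R) (x y : vec n) (r : R) :
  geometric_convex phi -> 0 < s -> polar_set (sublevel phi (1 / s)) x ->
  phi y = Fin r -> inner x y <= 1 + s * r.
Proof.
move=> [phi_ge0 [_ [phi_cvx phi0]]] s_gt0 Hx Hy.
have r_ge0 : 0 <= r by have := phi_ge0 y; rewrite Hy.
case: (Rle_dec r (1 / s)) => [r_small | r_large].
- have y_in_K : sublevel phi (1 / s) y by rewrite /sublevel Hy.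
  have := Hx y y_in_K; nra.
- have s_inv : s * (1 / s) = 1 by field; lra.
  have sr_gt1 : 1 < s * r by nra.
  have r_gt0 : 0 < r by nra.
  have l_inv : 1 / (s * r) * (s * r) = 1 by field; split; lra.
  have l_gt0 : 0 < 1 / (s * r) by apply: Rdiv_lt_0_compat; lra.
  have l_range : 0 < 1 / (s * r) < 1 by split; nra.
  have in_K := convex_origin _ _ _ _ _ phi_cvx phi0 Hy l_range.
  have level : 1 / (s * r) * r = 1 / s by field; split; lra.
  rewrite level in in_K.
  have := Hx _ in_K; rewrite inner_scale_r; nra.
Qed.

Theorem proposition2 (n : nat) (phi : vec n -> ereal) (s t : R) :
  geometric_convex phi -> 0 < s -> 0 < t ->
  vsubset (polar_set (sublevel phi (1 / s))) (sublevel (polar phi) s) /\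
  vsubset (sublevel (polar phi) s) (dilate (s * t + 1) (polar_set (sublevel phi t))).
Proof.
move=> phi_gc s_gt0 t_gt0; have phi_ge0 := proj1 phi_gc.
have K_polar x := polar_sublevel n phi s x phi_ge0 (Rlt_le _ _ s_gt0).
split=> x Hx.
- apply/K_polar => y r Hy; exact: polar_sublevel_bound phi_gc s_gt0 Hx Hy.
-
  apply: dilate_polar_set; first nra.
  move=> y; rewrite /sublevel; case Ey: (phi y) => [r|] //= r_le_t.
  have := (K_polar x).1 Hx y r Ey.
  have : s * r <= s * t by apply: Rmult_le_compat_l; lra.
  lra.
Qed.
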